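(* In an $L$-user functional decode-and-forward multi-way relay network with lattice codes, under the equal average channel gain scenario, the average sum rate of the proposed pairing scheme equals that of pairing scheme A and that of pairing scheme B.
   Context: Setting: $L$ users exchange messages via a single relay (no direct links, half-duplex); one time frame has a multiple access phase and a broadcast phase, each of $L-1$ slots; in each multiple-access slot a pair of users transmits dithered lattice codewords simultaneously, the relay decodes the modulo-lattice sum of their lattice points (functional decode-and-forward) and broadcasts it in the corresponding broadcast slot; users recover all messages using their own. User power $P$, relay power $P_r$, AWGN power $N_0$; $h_{j,r}$ is the zero-mean complex Gaussian (block Rayleigh) channel between user $j$ and the relay (reciprocal), with variance $\sigma^2_{h_{j,r}}$. Pairing schemes: proposed: the common user $i$ is the user with largest average channel gain, and every other user pairs with $i$ in its own slot; scheme A: in slot $t\in[1,L-1]$ users $t$ and $t+1$ pair; scheme B: in slot $t$, users $t$ and $L-t+1$ pair if $1\le t\le\lfloor L/2\rfloor$, and users $t+1$ and $L-t+1$ pair if $\lfloor L/2\rfloor<t\le L-1$. Equal average channel gain scenario: all $\sigma^2_{h_{j,r}}$ equal and fixed over all frames (the proposed scheme's common user is chosen at random each frame). Sum rate: for a scheme in which slot $t$ pairs users $a_t,b_t$, $R_s=\frac{1}{2(L-1)}\sum_{t}\left(\log\left(\frac{|h_{a_t,r}|^2}{|h_{a_t,r}|^2+|h_{b_t,r}|^2}+\frac{P|h_{a_t,r}|^2}{N_0}\right)+\log\left(\frac{|h_{b_t,r}|^2}{|h_{a_t,r}|^2+|h_{b_t,r}|^2}+\frac{P|h_{b_t,r}|^2}{N_0}\right)\right)$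 ($\log$ base 2); the average sum rate is its expectation over channel realizations. *)

From HB Require Import structures.
From mathcomp Require Import all_boot all_order all_algebra.
From mathcomp Require Import all_classical all_reals all_analysis.
From mathcomp Require Import normal_distribution.
Set Implicit Arguments. Unset Strict Implicit. Unset Printing Implicit Defensive.
Import Order.TTheory GRing.Theory Num.Theory.
Local Open Scope classical_set_scope.
Local Open Scope ring_scope.

(* Users are numbered 1..L.  The channel h_{j,r} = X (j,false) + i X (j,true):
   real part X (j,false), imaginary part X (j,true). *)

Definition mutually_independent d (T : measurableType d) (R : realType)
    (P : probability T R) (I : eqType) (s : seq I) (X : I -> {RV P >-> R}) :=
  forall (J : seq I), {subset J <= s} -> uniq J ->
  forall (B : I -> set R), (forall i, measurable (B i)) ->
    fine (P (\bigcap_(i in [set` J]) (X i @^-1` B i))) =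
    \prod_(i <- J) fine (P (X i @^-1` B i)).

Definition centered_gaussian d (T : measurableType d) (R : realType)
    (P : probability T R) (X : {RV P >-> R}) (v : R) :=
  forall B : set R, measurable B ->
    P (X @^-1` B) = normal_prob 0 (Num.sqrt v) B.

Definition channel_indices (L : nat) : seq (nat * bool) :=
  [seq (j, b) | j <- iota 1 L, b <- [:: false; true]].

(* Equal average channel gain scenario with block Rayleigh fading:
   h_{j,r}, j = 1..L, independent zero-mean circularly-symmetric complex
   Gaussian with common variance sigma2, i.e. real and imaginary parts are
   mutually independent N(0, sigma2/2). *)
Definition equal_gain_rayleigh d (T : measurableType d) (R : realType)
    (P : probability T R) (L : nat) (X : nat * bool -> {RV P >-> R})
    (sigma2 : R) :=
  mutually_independent (channel_indices L) X /\
  forall j b, (1 <= j <= L)%N -> centered_gaussian (X (j, b)) (sigma2 / 2).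

Definition gain d (T : measurableType d) (R : realType) (P : probability T R)
    (X : nat * bool -> {RV P >-> R}) (j : nat) (w : T) : R :=
  X (j, false) w ^+ 2 + X (j, true) w ^+ 2.

Definition log2 (R : realType) (x : R) : R := ln x / ln 2.

Definition pair_rate (R : realType) (Pw N0 ga gb : R) : R :=
  log2 (ga / (ga + gb) + Pw * ga / N0) + log2 (gb / (ga + gb) + Pw * gb / N0).

Definition sum_rate (R : realType) (L : nat) (Pw N0 : R) (g : nat -> R)
    (pairs : seq (nat * nat)) : R :=
  (2 * (L%:R - 1))^-1 * \sum_(p <- pairs) pair_rate Pw N0 (g p.1) (g p.2).

Definition pairs_proposed (L i : nat) : seq (nat * nat) :=
  [seq (i, j) | j <- iota 1 L & j != i].

Definition pairs_A (L : nat) : seq (nat * nat) :=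
  [seq (t, t.+1) | t <- iota 1 (L - 1)].

Definition pairs_B (L : nat) : seq (nat * nat) :=
  [seq (if (t <= L./2)%N then (t, L - t + 1)%N else (t.+1, L - t + 1)%N)
  | t <- iota 1 (L - 1)].

Definition avg_sum_rate d (T : measurableType d) (R : realType)
    (P : probability T R) (X : nat * bool -> {RV P >-> R}) (L : nat)
    (Pw N0 : R) (pairs : seq (nat * nat)) : \bar R :=
  (\int[P]_w (sum_rate L Pw N0 (fun j => gain X j w) pairs)%:E)%E.

(* average sum rate of the proposed scheme when the common user is drawn
   uniformly at random from {1..L}, independently of the channels *)
Definition avg_sum_rate_proposed d (T : measurableType d) (R : realType)
    (P : probability T R) (X : nat * bool -> {RV P >-> R}) (L : nat)
    (Pw N0 : R) : \bar R :=
  ((L%:R^-1)%:E * \sum_(1 <= i < L.+1) avg_sum_rate X L Pw N0 (pairs_proposed L i))%E.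

From HB Require Import structures.
From mathcomp Require Import all_boot all_order all_algebra.
From mathcomp Require Import all_classical all_reals all_analysis.
From mathcomp Require Import normal_distribution measurable_realfun.
From mathcomp Require Import ring lra zify.
Import Order.TTheory GRing.Theory Num.Theory.
Local Open Scope classical_set_scope.
Local Open Scope ring_scope.
Set Implicit Arguments. Unset Strict Implicit. Unset Printing Implicit Defensive.

(* For distinct users a and b, the rate of the slot pairing them is a fixed
   measurable function of the four real Gaussians Re h_a, Im h_a, Re h_b,
   Im h_b.  Independence makes their joint law the same product of centred
   normal laws for every such pair (the laws agree on boxes, a generating
   pi-system), so every slot has the same expected rate.  Each scheme uses
   L - 1 slots, each pairing two distinct users, so all average sum rates are
   equal.  Expectations are extended reals and a slot rate is unbounded below,
   so additivity over slots needs care: the positive part of a slot rate is at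
   most a multiple of the gains, hence integrable since Gaussians have finite
   second moments, and the expectation of a sum then splits as the difference
   of the expectations of its positive and negative parts. *)

Section product_generators.
Context d1 d2 (T1 : measurableType d1) (T2 : measurableType d2)
  (G1 : set (set T1)) (G2 : set (set T2)).
Hypotheses (mG1 : measurable = <<s G1 >>) (mG2 : measurable = <<s G2 >>).
Hypotheses (G1T : G1 setT) (G2T : G2 setT).

Lemma measurable_prod_generated :
  @measurable _ (T1 * T2)%type = <<s [set A `*` B | A in G1 & B in G2] >>.
Proof.
set G := [set A `*` B | A in G1 & B in G2].
rewrite eqEsubset; split; last first.
  apply: smallest_sub; first exact: sigma_algebra_measurable.
  move=> _ [A G1A [B G2B <-]]; apply: measurableX.
  - by rewrite mG1; exact: sub_sigma_algebra.
  - by rewrite mG2; exact: sub_sigma_algebra.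
(* Both projections, hence the identity, are measurable from <<s G >> to the
   product sigma-algebra. *)
have mfst : measurable_fun [set: g_sigma_algebraType G] fst.
  apply: (@measurability _ _ (g_sigma_algebraType G) _ _ fst _ mG1).
  move=> _ [A G1A <-]; apply: sub_sigma_algebra.
  by exists A => //; exists setT => //; rewrite setTI setXT.
have msnd : measurable_fun [set: g_sigma_algebraType G] snd.
  apply: (@measurability _ _ (g_sigma_algebraType G) _ _ snd _ mG2).
  move=> _ [B G2B <-]; apply: sub_sigma_algebra.
  by exists setT => //; exists B => //; rewrite setTI setTX.
move=> B mB; have := measurable_fun_pair mfst msnd measurableT mB.
by rewrite setTI; congr <<s _ >>; apply/seteqP; split => -[].
Qed.

End product_generators.

Lemma setI_closed_setX T1 T2 (G1 : set (set T1)) (G2 : set (set T2)) :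
  setI_closed G1 -> setI_closed G2 ->
  setI_closed [set A `*` B | A in G1 & B in G2].
Proof.
move=> IG1 IG2 _ _ [A1 G1A1 [B1 G2B1 <-]] [A2 G1A2 [B2 G2B2 <-]].
rewrite -setXI; exists (A1 `&` A2); first exact: IG1.
by exists (B1 `&` B2) => //; exact: IG2.
Qed.

Section integral_eq_law.
Local Open Scope ereal_scope.
Context d dU (T : measurableType d) (U : measurableType dU) (R : realType)
  (P : probability T R) (G : set (set U)).
Hypotheses (mG : measurable = <<s G >>) (setIG : setI_closed G) (GT : G setT).

Lemma ge0_integral_eq_law (Y Y' : T -> U) (h : U -> \bar R) :
  measurable_fun setT Y -> measurable_fun setT Y' ->
  (forall A, G A -> P (Y @^-1` A) = P (Y' @^-1` A)) ->
  measurable_fun setT h -> (forall u, 0 <= h u) ->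
  \int[P]_w h (Y w) = \int[P]_w h (Y' w).
Proof.
move=> mY mY' YY' mh h0.
pose mY_ : {mfun T >-> U} := HB.pack Y (isMeasurableFun.Build _ _ _ _ _ mY).
pose mY'_ : {mfun T >-> U} := HB.pack Y' (isMeasurableFun.Build _ _ _ _ _ mY').
have -> : \int[P]_w h (Y w) = \int[distribution P mY_]_u h u.
  by rewrite (ge0_integral_pushforward mY).
have -> : \int[P]_w h (Y' w) = \int[distribution P mY'_]_u h u.
  by rewrite (ge0_integral_pushforward mY').
apply: eq_measure_integral => A mA _.
apply: (measure_unique G (fun=> setT)) => //; first by rewrite bigcup_const.
move=> _ /=; change (P (Y @^-1` setT) < +oo).
by rewrite preimage_setT probability_setT ltry.
Qed.

End integral_eq_law.

Section normal_second_moment.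
Context (R : realType).
Local Notation mu := (@lebesgue_measure R).

Lemma ge0_integral_normal_prob (s : R) (f : R -> \bar R) :
  (forall x, (0 <= f x)%E) -> measurable_fun setT f ->
  (\int[normal_prob 0 s]_x f x = \int[mu]_x (f x * (normal_pdf 0 s x)%:E))%E.
Proof.
move=> f0 mf.
have numu := @normal_prob_dominates R 0 s.
rewrite -(Radon_Nikodym_SigmaFinite.change_of_variables numu) //.
apply: ae_eq_integral => //.
- apply: emeasurable_funM => //.
  exact: measurable_int (Radon_Nikodym_SigmaFinite.f_integrable numu).
- apply: emeasurable_funM => //.
  by apply/measurable_EFinP; exact: measurable_normal_pdf.
- apply: ae_eqe_mul2l; apply: integral_ae_eq => //.
  + exact: Radon_Nikodym_SigmaFinite.f_integrable.
  + apply/measurable_EFinP; exact: measurable_normal_pdf.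
  + by move=> E _ mE; rewrite -Radon_Nikodym_SigmaFinite.f_integral.
Qed.

(* With t := x^2 / (8 s^2), the density of deviation s is that of deviation 2s
   times exp(-3t), up to constants, and t * exp(-3t) <= 1. *)
Lemma normal_pdf_sqr_le (s x : R) : s != 0 ->
  x ^+ 2 * normal_pdf 0 s x <=
  (s ^+ 2 *+ 8 * normal_peak s / normal_peak (s *+ 2)) * normal_pdf 0 (s *+ 2) x.
Proof.
move=> s0.
have s20 : s *+ 2 != 0 by rewrite mulrn_eq0 negb_or s0.
rewrite !normal_pdfE //= /normal_fun.
set ps := normal_peak s; set p2 := normal_peak (s *+ 2).
have ps0 : 0 < ps by exact: normal_peak_gt0.
have p20 : 0 < p2 by exact: normal_peak_gt0.
set t := x ^+ 2 / (s ^+ 2 *+ 8).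
have t0 : 0 <= t by rewrite /t divr_ge0 ?sqr_ge0 // mulrn_wge0 ?sqr_ge0.
set E1 := expR (- (x - 0) ^+ 2 / ((s *+ 2) ^+ 2 *+ 2)).
set E3 := expR (- (3 * t)).
have tE3 : t * E3 <= 1.
  rewrite /E3 expRN -/(t / _) ler_pdivrMr ?expR_gt0 // mul1r.
  apply: le_trans (expR_ge1Dx _); lra.
have -> : expR (- (x - 0) ^+ 2 / (s ^+ 2 *+ 2)) = E1 * E3.
  by rewrite /E1 /E3 -expRD; congr expR; rewrite /t; field.
have -> : s ^+ 2 *+ 8 * ps / p2 * (p2 * E1) = ps * E1 * (s ^+ 2 *+ 8).
  by field; rewrite gt_eqF.
have -> : x ^+ 2 * (ps * (E1 * E3)) = ps * E1 * ((s ^+ 2 *+ 8) * (t * E3)).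
  by rewrite /t; field.
apply: ler_wpM2l; first by rewrite mulr_ge0 ?expR_ge0 ?ltW.
by rewrite -[leRHS]mulr1 ler_wpM2l // mulrn_wge0 ?sqr_ge0.
Qed.

Lemma normal_prob_sqr_lty (s : R) : s != 0 ->
  (\int[normal_prob 0 s]_x ((x ^+ 2)%:E) < +oo)%E.
Proof.
move=> s0.
have mx2 : measurable_fun [set: R] (fun x : R => x ^+ 2) by exact: measurable_funX.
rewrite ge0_integral_normal_prob //; last exact/measurable_EFinP.
  set K := s ^+ 2 *+ 8 * normal_peak s / normal_peak (s *+ 2).
  apply: (@le_lt_trans _ _ (\int[mu]_x ((K * normal_pdf 0 (s *+ 2) x)%:E))%E).
    apply: ge0_le_integral => //.
    - by move=> x _; rewrite -EFinM lee_fin mulr_ge0 ?sqr_ge0 ?normal_pdf_ge0.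
    - apply: emeasurable_funM; first exact/measurable_EFinP.
      apply/measurable_EFinP; exact: measurable_normal_pdf.
    - apply/measurable_EFinP/measurable_funM => //; exact: measurable_normal_pdf.
    - by move=> x _; rewrite -EFinM lee_fin normal_pdf_sqr_le.
  under eq_integral do rewrite EFinM.
  rewrite integralZl //; last exact: integrable_normal_pdf.
  by rewrite integral_normal_pdf mule1 ltry.
by move=> x; rewrite lee_fin sqr_ge0.
Qed.

End normal_second_moment.

Lemma sube_swap (R : realDomainType) (a b g h : \bar R) :
  a \is a fin_num -> g \is a fin_num -> (0 <= b)%E -> (0 <= h)%E ->
  (a + h = g + b)%E -> (a - b = g - h)%E.
Proof.
case: a => // a _; case: g => // g _.
case: b => [b||] //; case: h => [h||] //= _ _.
by move=> [ahgb]; congr EFin; lra.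
Qed.

Section integralB_ge0.
Local Open Scope ereal_scope.
Context d (T : measurableType d) (R : realType) (mu : {measure set T -> \bar R}).

Lemma ge0_integralB_lty (G H : T -> R) :
  measurable_fun setT G -> measurable_fun setT H ->
  (forall x, (0 <= G x)%R) -> (forall x, (0 <= H x)%R) ->
  \int[mu]_x (G x)%:E < +oo ->
  \int[mu]_x (G x - H x)%:E = \int[mu]_x (G x)%:E - \int[mu]_x (H x)%:E.
Proof.
move=> mG mH G0 H0 Gfin; set f := fun x => (G x - H x)%:E.
have mf : measurable_fun setT f by exact/measurable_EFinP/measurable_funB.
have fposE x : f^\+ x = (Num.max (G x - H x) 0)%:E by rewrite funeposE EFin_max.
have fnegE x : f^\- x = (Num.max (H x - G x) 0)%:E.
  by rewrite funenegE -EFinN opprB EFin_max.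
have IG0 : 0 <= \int[mu]_x (G x)%:E by apply: integral_ge0 => x _; rewrite lee_fin.
have Ipos : \int[mu]_x f^\+ x <= \int[mu]_x (G x)%:E.
  apply: ge0_le_integral => //; first exact: measurable_funepos.
  - exact/measurable_EFinP.
  - by move=> x _; rewrite fposE lee_fin ge_max lerBlDr lerDl H0 G0.
rewrite integralE; apply: sube_swap.
- by rewrite ge0_fin_numE ?integral_ge0 // (le_lt_trans Ipos).
- by rewrite ge0_fin_numE.
- by apply: integral_ge0 => x _.
- by apply: integral_ge0 => x _; rewrite lee_fin.
rewrite -!ge0_integralD //; try exact/measurable_EFinP.
all: try exact: measurable_funepos.
all: try exact: measurable_funeneg.
all: try (by move=> x _; rewrite lee_fin).
apply: eq_integral => x _; rewrite fposE fnegE -!EFinD; congr EFin.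
rewrite /Num.max /Order.max.
by case: (ltP (G x - H x)%R 0%R); case: (ltP (H x - G x)%R 0%R); lra.
Qed.

End integralB_ge0.

Lemma measurable_inv (R : realType) : measurable_fun [set: R] (@GRing.inv R).
Proof.
rewrite -(setUCr [set 0]); apply/measurable_funU => //; first exact: measurableC.
split; first exact: measurable_fun_set1.
apply: open_continuous_measurable_fun.
  rewrite openC; apply: (accessible_finite_set_closed.1 _); last exact: finite_set1.
  exact: hausdorff_accessible.
by move=> x; rewrite inE => /eqP x0; exact: inv_continuous.
Qed.

Lemma ln2_gt0 (R : realType) : 0 < ln (2 : R).
Proof. by apply: ln_gt0; rewrite ltr1n. Qed.

Lemma log2_le_divln2 (R : realType) (u c : R) :
  0 <= c -> u <= 1 + c -> log2 u <= c / ln 2.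
Proof.
move=> c0 uc; rewrite /log2 ler_pM2r ?invr_gt0 ?ln2_gt0 //.
have [u1|u1] := leP u 1; first exact: le_trans (ln_le0 u1) c0.
rewrite -[u](subrK 1) addrC; apply: le_trans (le_ln1Dx _) _; lra.
Qed.

Lemma divr_le1 (R : numFieldType) (a b : R) : 0 <= a <= b -> a / b <= 1.
Proof.
case/andP=> a0 ab; have [->|b0] := eqVneq b 0; first by rewrite invr0 mulr0.
by rewrite ler_pdivrMr ?mul1r // lt_neqAle eq_sym b0 (le_trans a0).
Qed.

Section pair_rate.
Context (R : realType) (Pw N0 : R).

Lemma measurable_pair_rate d (T : measurableType d) (ga gb : T -> R) :
  measurable_fun setT ga -> measurable_fun setT gb ->
  measurable_fun setT (fun x => pair_rate Pw N0 (ga x) (gb x)).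
Proof.
have mlog2 (f : T -> R) : measurable_fun setT f ->
    measurable_fun setT (fun x => log2 (f x)).
  move=> mf; apply: measurable_funM => //.
  exact: measurableT_comp (@measurable_ln R) mf.
have mdiv (f g : T -> R) : measurable_fun setT f -> measurable_fun setT g ->
    measurable_fun setT (fun x => f x / g x).
  move=> mf mg; apply: measurable_funM => //.
  exact: measurableT_comp (@measurable_inv R) mg.
move=> mga mgb; apply: measurable_funD; apply: mlog2; apply: measurable_funD;
  apply: mdiv => //; by [exact: measurable_funD|exact: measurable_funM].
Qed.

Hypotheses (Pw0 : 0 < Pw) (N00 : 0 < N0).

Lemma pair_rate_le (ga gb : R) : 0 <= ga -> 0 <= gb ->
  pair_rate Pw N0 ga gb <= Pw / N0 / ln 2 * (ga + gb).
Proof.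
move=> ga0 gb0.
have log2_le g : 0 <= g <= ga + gb ->
    log2 (g / (ga + gb) + Pw * g / N0) <= Pw * g / N0 / ln 2.
  move=> /[dup] /andP[g0 _] gs; apply: log2_le_divln2.
    by rewrite divr_ge0 ?mulr_ge0 // ltW.
  by rewrite lerD2r divr_le1.
have gaS : 0 <= ga <= ga + gb by rewrite ga0 lerDl.
have gbS : 0 <= gb <= ga + gb by rewrite gb0 lerDr.
apply: le_trans (lerD (log2_le _ gaS) (log2_le _ gbS)) _.
rewrite le_eqVlt; apply/orP; left; apply/eqP.
by field; rewrite !gt_eqF ?ln2_gt0.
Qed.

Definition channel_rate (y : (R * R) * (R * R)) : R :=
  pair_rate Pw N0 (y.1.1 ^+ 2 + y.1.2 ^+ 2) (y.2.1 ^+ 2 + y.2.2 ^+ 2).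
Definition channel_rate_pos y := Num.max (channel_rate y) 0.
Definition channel_rate_neg y := Num.max (- channel_rate y) 0.

Lemma channel_rateE y : channel_rate y = channel_rate_pos y - channel_rate_neg y.
Proof.
rewrite /channel_rate_pos /channel_rate_neg /Num.max /Order.max.
by case: (ltP (channel_rate y) 0); case: (ltP (- channel_rate y) 0); lra.
Qed.

Lemma channel_rate_pos_ge0 y : 0 <= channel_rate_pos y.
Proof. by rewrite le_max lexx orbT. Qed.

Lemma channel_rate_neg_ge0 y : 0 <= channel_rate_neg y.
Proof. by rewrite le_max lexx orbT. Qed.

Lemma measurable_channel_rate : measurable_fun setT channel_rate.
Proof.
have msqnorm (f : (R * R) * (R * R) -> R * R) : measurable_fun setT f ->
    measurable_fun setT (fun y => (f y).1 ^+ 2 + (f y).2 ^+ 2).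
  move=> mf; apply: measurable_funD; apply: measurable_funX.
  - exact: measurableT_comp measurable_fst mf.
  - exact: measurableT_comp measurable_snd mf.
apply: measurable_pair_rate; apply: msqnorm.
- exact: measurable_fst.
- exact: measurable_snd.
Qed.

Lemma measurable_channel_rate_pos : measurable_fun setT channel_rate_pos.
Proof. exact: measurable_maxr measurable_channel_rate _. Qed.

Lemma measurable_channel_rate_neg : measurable_fun setT channel_rate_neg.
Proof.
by apply: measurable_maxr => //; apply: measurable_funN; exact: measurable_channel_rate.
Qed.

Lemma channel_rate_pos_le y : channel_rate_pos y <=
  Pw / N0 / ln 2 * (y.1.1 ^+ 2 + y.1.2 ^+ 2 + (y.2.1 ^+ 2 + y.2.2 ^+ 2)).
Proof.
rewrite ge_max pair_rate_le ?addr_ge0 ?sqr_ge0 //=.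
by rewrite !mulr_ge0 ?addr_ge0 ?sqr_ge0 ?invr_ge0 ?ltW ?ln2_gt0.
Qed.

End pair_rate.

Definition rectangles d1 d2 (T1 : measurableType d1) (T2 : measurableType d2) :
  set (set (T1 * T2)) := [set A `*` B | A in measurable & B in measurable].
Arguments rectangles {d1 d2} T1 T2.

Lemma measurable_rectangles d1 d2 (T1 : measurableType d1) (T2 : measurableType d2) :
  @measurable _ (T1 * T2)%type = <<s rectangles T1 T2 >>.
Proof. exact: measurable_prod_measurableType. Qed.

Lemma rectanglesT d1 d2 (T1 : measurableType d1) (T2 : measurableType d2) :
  rectangles T1 T2 setT.
Proof. by exists setT => //; exists setT => //; rewrite setXTT. Qed.

Definition distinct_users (L : nat) (p : nat * nat) : Prop :=
  [/\ p.1 != p.2, (1 <= p.1 <= L)%N & (1 <= p.2 <= L)%N].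

Section channels.
Context (d : measure_display) (T : measurableType d) (R : realType)
  (P : probability T R) (L : nat) (X : nat * bool -> {RV P >-> R}) (sigma2 : R).

Definition channel_pair (p : nat * nat) (w : T) : (R * R) * (R * R) :=
  ((X (p.1, false) w, X (p.1, true) w), (X (p.2, false) w, X (p.2, true) w)).

Lemma measurable_channel_pair p : measurable_fun setT (channel_pair p).
Proof.
by apply: measurable_fun_pair; apply: measurable_fun_pair; exact: measurable_funPT.
Qed.

Lemma mem_channel_indices j b : (1 <= j <= L)%N -> (j, b) \in channel_indices L.
Proof.
move=> jL; apply/allpairsP; exists (j, b); split => //=; last by case: b.
by rewrite mem_iota add1n ltnS.
Qed.

Hypothesis gaussian_channels : equal_gain_rayleigh L X sigma2.

Lemma channel_pair_box p (A1 A2 A3 A4 : set R) : distinct_users L p ->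
  measurable A1 -> measurable A2 -> measurable A3 -> measurable A4 ->
  P (channel_pair p @^-1` ((A1 `*` A2) `*` (A3 `*` A4))) =
  (\prod_(A <- [:: A1; A2; A3; A4])
     fine (normal_prob 0 (Num.sqrt (sigma2 / 2)) A))%:E.
Proof.
case: p => a b [/= ab aL bL] mA1 mA2 mA3 mA4; case: gaussian_channels => indep gauss.
pose J := [:: (a, false); (a, true); (b, false); (b, true)].
pose B (i : nat * bool) := if i.1 == a then (if i.2 then A2 else A1)
                           else (if i.2 then A4 else A3).
have mB i : measurable (B i) by rewrite /B; do 2!case: ifP.
have JL : {subset J <= channel_indices L}.
  by move=> i; rewrite !inE => /or4P[] /eqP ->; exact: mem_channel_indices.
have ba : (b == a) = false by rewrite eq_sym (negbTE ab).
have uJ : uniq J by rewrite /= !inE !xpair_eqE /= !eqxx /= (negbTE ab).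
have preimE : channel_pair (a, b) @^-1` ((A1 `*` A2) `*` (A3 `*` A4)) =
    \bigcap_(i in [set` J]) (X i @^-1` B i).
  apply/seteqP; split => [w [[h1 h2] [h3 h4]] i|w h].
    by rewrite /= !inE => /or4P[] /eqP -> /=; rewrite /B /= ?eqxx ?ba.
  have := h (a, false); have := h (a, true); have := h (b, false).
  have := h (b, true); rewrite /B /= eqxx ba !inE !eqxx ?orbT.
  by move=> h4 h3 h2 h1; split; split; [exact: h1|exact: h2|exact: h3|exact: h4].
rewrite -[LHS]fineK; last first.
  apply: fin_num_measure; rewrite -[X in measurable X]setTI.
  by apply: measurable_channel_pair => //; do 2!apply: measurableX.
rewrite preimE indep //; congr EFin.
by rewrite /J !big_cons !big_nil /B /= eqxx ba !gauss.
Qed.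

Lemma ge0_integral_channel_pair p p' (h : (R * R) * (R * R) -> \bar R) :
  distinct_users L p -> distinct_users L p' ->
  measurable_fun setT h -> (forall y, (0 <= h y)%E) ->
  (\int[P]_w h (channel_pair p w) = \int[P]_w h (channel_pair p' w))%E.
Proof.
move=> pL p'L mh h0.
apply: (@ge0_integral_eq_law _ _ _ _ _ _
  [set A `*` B | A in rectangles R R & B in rectangles R R]) => //.
- apply: measurable_prod_generated; try exact: measurable_rectangles; exact: rectanglesT.
- by do 2!apply: setI_closed_setX; exact: measurableI.
- exists setT; first exact: rectanglesT.
  by exists setT; [exact: rectanglesT|rewrite setXTT].
- exact: measurable_channel_pair.
- exact: measurable_channel_pair.
move=> _ [_ [A1 mA1 [A2 mA2 <-]] [_ [A3 mA3 [A4 mA4 <-]] <-]].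
by rewrite !channel_pair_box.
Qed.

Lemma channel_sqr_lty j b : (1 <= j <= L)%N -> 0 < sigma2 ->
  (\int[P]_w ((X (j, b) w ^+ 2)%:E) < +oo)%E.
Proof.
move=> jL s0; have gauss := gaussian_channels.2 j b jL.
have mX : measurable_fun [set: T] (X (j, b) : T -> measurableTypeR R).
  exact: (measurable_funPT (X (j, b))).
pose Xm : {mfun T >-> measurableTypeR R} :=
  HB.pack (X (j, b) : T -> measurableTypeR R) (isMeasurableFun.Build _ _ _ _ _ mX).
have -> : (\int[P]_w ((X (j, b) w ^+ 2)%:E) =
    \int[distribution P Xm]_(y in setT) (y ^+ 2)%:E)%E.
  rewrite [RHS](ge0_integral_pushforward mX) //.
  - exact/measurable_EFinP/measurable_funX.
  - by move=> y _; rewrite lee_fin sqr_ge0.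
rewrite (@eq_measure_integral _ _ _ _ (normal_prob 0 (Num.sqrt (sigma2 / 2)))).
  by apply: normal_prob_sqr_lty; rewrite gt_eqF // sqrtr_gt0 divr_gt0.
by move=> A mA _; exact: gauss.
Qed.

End channels.

Section schemes.
Context (d : measure_display) (T : measurableType d) (R : realType)
  (P : probability T R) (L : nat) (X : nat * bool -> {RV P >-> R})
  (Pw N0 sigma2 : R).
Hypothesis gaussian_channels : equal_gain_rayleigh L X sigma2.
Hypotheses (Pw0 : 0 < Pw) (N00 : 0 < N0) (sigma2_gt0 : 0 < sigma2).
Local Open Scope ereal_scope.

Local Notation rate_pos p w := (channel_rate_pos Pw N0 (channel_pair X p w)).
Local Notation rate_neg p w := (channel_rate_neg Pw N0 (channel_pair X p w)).

Lemma channel_rate_pos_lty p :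
  distinct_users L p -> \int[P]_w (rate_pos p w)%:E < +oo.
Proof.
case: p => a b [_ aL bL]; set C := (Pw / N0 / ln 2)%R.
have C0 : (0 <= C)%R by rewrite !divr_ge0 ?ltW ?ln2_gt0.
pose J := [:: (a, false); (a, true); (b, false); (b, true)].
have msqr i : measurable_fun [set: T] (fun w => (X i w ^+ 2)%:E).
  by apply/measurable_EFinP/measurable_funX; exact: measurable_funPT.
apply: (@le_lt_trans _ _ (\int[P]_w (C%:E * \sum_(i <- J) (X i w ^+ 2)%:E))).
  apply: ge0_le_integral => //.
  - by move=> w _; rewrite lee_fin channel_rate_pos_ge0.
  - apply/measurable_EFinP; apply: measurableT_comp (measurable_channel_pair _ _).
    exact: measurable_channel_rate_pos.
  - by apply: emeasurable_funM => //; exact: emeasurable_sum.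
  - move=> w _; rewrite sumEFin -EFinM lee_fin /J !big_cons big_nil addr0 !addrA.
    by rewrite (le_trans (channel_rate_pos_le _ _ _)) // !addrA.
rewrite ge0_integralZl //; last 2 first.
- exact: emeasurable_sum.
- by move=> w _; apply: sume_ge0 => i _; rewrite lee_fin sqr_ge0.
rewrite ge0_integral_sum //; last by move=> i w _; rewrite lee_fin sqr_ge0.
apply: lte_mul_pinfty => //; rewrite big_seq; apply: lte_sum_pinfty => i.
by rewrite /J !inE => /or4P[] /eqP ->; apply: (channel_sqr_lty gaussian_channels).
Qed.

Lemma ge0_integral_slots (h : (R * R) * (R * R) -> R) (c : R) p0 S :
  measurable_fun setT h -> (forall y, 0 <= h y)%R -> (0 <= c)%R ->
  distinct_users L p0 -> {in S, forall p, distinct_users L p} ->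
  \int[P]_w (c * \sum_(p <- S) h (channel_pair X p w))%:E =
  c%:E * (\int[P]_w (h (channel_pair X p0 w))%:E *+ size S).
Proof.
move=> mh h0 c0 p0L SL.
have mhp p : measurable_fun [set: T] (fun w => (h (channel_pair X p w))%:E).
  exact/measurable_EFinP/(measurableT_comp mh)/measurable_channel_pair.
under eq_integral do rewrite EFinM -sumEFin.
rewrite ge0_integralZl //; last 2 first.
- exact: emeasurable_sum.
- by move=> w _; apply: sume_ge0 => p _; rewrite lee_fin.
rewrite ge0_integral_sum //; last by move=> p w _; rewrite lee_fin.
set I0 := \int[P]_w (h (channel_pair X p0 w))%:E.
congr (_ * _); rewrite big_seq (eq_bigr (fun=> I0)).
  by rewrite -big_seq big_const_seq count_predT iter_addr_0.
move=> p pS.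
apply: (ge0_integral_channel_pair gaussian_channels (SL p pS) p0L (h := EFin \o h)).
- exact/measurable_EFinP.
- by move=> y; rewrite lee_fin.
Qed.

Lemma avg_sum_rate_distinct p0 S :
  distinct_users L p0 -> {in S, forall p, distinct_users L p} ->
  let c := ((2 * (L%:R - 1))^-1 : R)%R in
  avg_sum_rate X L Pw N0 S =
  c%:E * (\int[P]_w (rate_pos p0 w)%:E *+ size S) -
  c%:E * (\int[P]_w (rate_neg p0 w)%:E *+ size S).
Proof.
move=> p0L SL c.
have c0 : (0 <= c)%R.
  have L2 : (2 <= L)%N by case: p0 p0L => a b [/= ab aL bL]; lia.
  by rewrite invr_ge0 mulr_ge0 // subr_ge0 ler1n ltnW.
have sum_rateE w : sum_rate L Pw N0 (gain X ^~ w) S =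
    (c * \sum_(p <- S) rate_pos p w - c * \sum_(p <- S) rate_neg p w)%R.
  rewrite -mulrBr -sumrB; congr (_ * _)%R.
  by apply: eq_bigr => p _; exact: (channel_rateE Pw N0 (channel_pair X p w)).
rewrite /avg_sum_rate; under eq_integral do rewrite sum_rateE.
have msum (h : (R * R) * (R * R) -> R) : measurable_fun setT h ->
    measurable_fun [set: T] (fun w => c * \sum_(p <- S) h (channel_pair X p w))%R.
  move=> mh; apply: measurable_funM => //; apply: measurable_sum => p.
  exact: measurableT_comp mh (measurable_channel_pair _ _).
have slotsE (h : (R * R) * (R * R) -> R) :
    measurable_fun setT h -> (forall y, 0 <= h y)%R ->
    \int[P]_w (c * \sum_(p <- S) h (channel_pair X p w))%:E =
    c%:E * (\int[P]_w (h (channel_pair X p0 w))%:E *+ size S).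
  by move=> mh h0; exact: ge0_integral_slots.
have mpos := measurable_channel_rate_pos Pw N0.
have mneg := measurable_channel_rate_neg Pw N0.
have pos0 := channel_rate_pos_ge0 Pw N0; have neg0 := channel_rate_neg_ge0 Pw N0.
rewrite ge0_integralB_lty ?slotsE //; try exact: msum.
- by move=> w; rewrite mulr_ge0 // sumr_ge0.
- by move=> w; rewrite mulr_ge0 // sumr_ge0.
have := channel_rate_pos_lty p0L; have : 0 <= \int[P]_w (rate_pos p0 w)%:E.
  by apply: integral_ge0 => w _; rewrite lee_fin.
case: (\int[P]_w _) => // r _ _.
by rewrite -EFin_natmul -EFinM ltry.
Qed.

Lemma avg_sum_rate_eq S S' :
  {in S, forall p, distinct_users L p} -> {in S', forall p, distinct_users L p} ->
  size S = size S' -> avg_sum_rate X L Pw N0 S = avg_sum_rate X L Pw N0 S'.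
Proof.
case: S => [|p0 S] SL S'L; first by move/esym/size0nil ->.
have p0L := SL p0 (mem_head _ _).
by move=> eq_size; rewrite !(avg_sum_rate_distinct p0L) // eq_size.
Qed.

End schemes.

Lemma pairs_A_distinct L : {in pairs_A L, forall p, distinct_users L p}.
Proof. by move=> p /mapP[t]; rewrite mem_iota => /andP[t1 tL] ->; split => /=; lia. Qed.

Lemma pairs_B_distinct L : {in pairs_B L, forall p, distinct_users L p}.
Proof.
move=> p /mapP[t]; rewrite mem_iota => /andP[t1 tL] ->.
by case: ifP => h; split => /=; lia.
Qed.

Lemma pairs_proposed_distinct L i : (1 <= i <= L)%N ->
  {in pairs_proposed L i, forall p, distinct_users L p}.
Proof.
move=> iL p /mapP[j]; rewrite mem_filter mem_iota => /andP[ji /andP[j1 jL]] ->.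
by split => /=; lia.
Qed.

Lemma size_pairs_A L : size (pairs_A L) = (L - 1)%N.
Proof. by rewrite size_map size_iota. Qed.

Lemma size_pairs_B L : size (pairs_B L) = (L - 1)%N.
Proof. by rewrite size_map size_iota. Qed.

Lemma size_pairs_proposed L i : (1 <= i <= L)%N ->
  size (pairs_proposed L i) = (L - 1)%N.
Proof.
move=> iL; rewrite size_map size_filter.
have := count_predC (pred1 i) (iota 1 L).
rewrite count_uniq_mem ?iota_uniq // mem_iota size_iota.
have -> : (1 <= i < 1 + L)%N by lia.
by move=> cntE; rewrite -[in RHS]cntE add1n subn1.
Qed.

Theorem proposition4 (d : measure_display) (T : measurableType d)
    (R : realType) (P : probability T R) (L : nat)
    (X : nat * bool -> {RV P >-> R}) (Pw Pr N0 sigma2 : R) :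
  (2 <= L)%N -> 0 < Pw -> 0 < Pr -> 0 < N0 -> 0 < sigma2 ->
  equal_gain_rayleigh L X sigma2 ->
  avg_sum_rate_proposed X L Pw N0 = avg_sum_rate X L Pw N0 (pairs_A L) /\
  avg_sum_rate_proposed X L Pw N0 = avg_sum_rate X L Pw N0 (pairs_B L).
Proof.
(* The relay power does not enter the sum-rate formula. *)
move=> L2 Pw0 _ N00 s0 gaussian.
have sameE := avg_sum_rate_eq gaussian Pw0 N00 s0.
have same_as_A i : (1 <= i < L.+1)%N ->
    avg_sum_rate X L Pw N0 (pairs_proposed L i) =
    avg_sum_rate X L Pw N0 (pairs_A L).
  move=> iL; apply: sameE; first exact: pairs_proposed_distinct.
    exact: pairs_A_distinct.
  by rewrite size_pairs_proposed ?size_pairs_A.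
have -> : avg_sum_rate_proposed X L Pw N0 = avg_sum_rate X L Pw N0 (pairs_A L).
  rewrite /avg_sum_rate_proposed (eq_big_nat _ _ same_as_A).
  rewrite sumr_const_nat subSS subn0.
  set V := avg_sum_rate _ _ _ _ (pairs_A L).
  rewrite -[(V *+ L)%R](mule_natl V L) muleA -EFinM mulVf ?mul1e //.
  by rewrite pnatr_eq0 -lt0n (leq_trans _ L2).
split => //; apply: sameE; first exact: pairs_A_distinct.
  exact: pairs_B_distinct.
by rewrite size_pairs_A size_pairs_B.
Qed.
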